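(* Let $f\in C^2(\mathbb{R}^d)$ with $\nabla f$ globally $L$-Lipschitz, $h>0$, $\beta\ge0$, $c\le\gamma_k\le C$ ($0<c\le C$), and $\beta+\frac h2<\frac cL$. Let $(x_k)$ be generated by $y_k=x_k+\alpha_k(x_k-x_{k-1})$, $x_{k+1}=y_k-s_k\nabla f(x_k+\frac\beta h(x_k-x_{k-1}))$ ($k\ge1$) with $\alpha_k=\frac1{1+\gamma_kh}$, $s_k=h^2\alpha_k$. Let $v_k=x_k-x_{k-1}$, $\tilde\alpha=\frac{\beta L}h+\frac1{h^2}$, and $V_k=f(x_k)+\frac{\tilde\alpha}2\|v_k\|^2$. Then for every $k\ge1$, $$V_{k+1}\le V_k-\delta\|v_{k+1}\|^2,\qquad\delta=\frac ch-\frac L2-\frac{\beta L}h>0.$$ *)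

From HB Require Import structures.
From mathcomp Require Import all_boot all_order all_algebra.
From mathcomp Require Import all_classical all_reals all_analysis.
Set Implicit Arguments. Unset Strict Implicit. Unset Printing Implicit Defensive.
Import Order.TTheory GRing.Theory Num.Theory.
Import numFieldNormedType.Exports.
Local Open Scope ring_scope.

Definition dotv {R : realType} {d : nat} (u v : 'rV[R]_d) : R :=
  \sum_(i < d) u ord0 i * v ord0 i.
Definition enorm {R : realType} {d : nat} (v : 'rV[R]_d) : R :=
  Num.sqrt (dotv v v).

Definition is_gradient {R : realType} {d : nat}
  (f : 'rV[R]_d -> R) (g : 'rV[R]_d -> 'rV[R]_d) : Prop :=
  forall x : 'rV[R]_d, differentiable f x /\
    (forall v : 'rV[R]_d, ('d f x : 'rV[R]_d -> R) v = dotv (g x) v).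

Definition C2_with_gradient {R : realType} {d : nat}
  (f : 'rV[R]_d -> R) (g : 'rV[R]_d -> 'rV[R]_d) : Prop :=
  is_gradient f g /\
  (forall x : 'rV[R]_d, differentiable g x) /\
  (forall v : 'rV[R]_d,
      continuous (fun x : 'rV[R]_d => ('d g x : 'rV[R]_d -> 'rV[R]_d) v)).

Definition lipschitz_euclid {R : realType} {d : nat}
  (g : 'rV[R]_d -> 'rV[R]_d) (L : R) : Prop :=
  forall x y : 'rV[R]_d, enorm (g x - g y) <= L * enorm (x - y).

From HB Require Import structures.
From mathcomp Require Import all_boot all_order all_algebra.
From mathcomp Require Import all_classical all_reals all_analysis.
From mathcomp Require Import ring lra.
Import Order.TTheory GRing.Theory Num.Theory.
Import numFieldNormedType.Exports.
Local Open Scope ring_scope.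

(* The descent lemma f y <= f x + <g x, y - x> + L/2 |y - x|^2 bounds f at the
   new iterate.  Writing the update as h^2 (1 + gamma h)^-1 g z = alpha v_k - v_{k+1}
   expresses <g z, v_{k+1}> through <v_k, v_{k+1}> and |v_{k+1}|^2; the remaining
   error <g x_k - g z, v_{k+1}>, with z the extrapolated point, is controlled by
   Lipschitz continuity and Young's inequality, which produces the extra weight
   beta L / h in the energy.  Since gamma_k >= c, all terms collect into
   -delta |v_{k+1}|^2, and delta > 0 is exactly beta + h/2 < c/L. *)

Section InnerProduct.
Context {R : realType} {d : nat}.
Implicit Types u v w : 'rV[R]_d.

Lemma dotvC u v : dotv u v = dotv v u.
Proof. by apply: eq_bigr => i _; rewrite mulrC. Qed.

Lemma dotvDl u v w : dotv (u + v) w = dotv u w + dotv v w.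
Proof. by rewrite /dotv -big_split; apply: eq_bigr => i _; rewrite !mxE mulrDl. Qed.

Lemma dotvZl a u v : dotv (a *: u) v = a * dotv u v.
Proof. by rewrite /dotv mulr_sumr; apply: eq_bigr => i _; rewrite !mxE mulrA. Qed.

Lemma dotvNl u v : dotv (- u) v = - dotv u v.
Proof. by rewrite -scaleN1r dotvZl mulN1r. Qed.

Lemma dotvBl u v w : dotv (u - v) w = dotv u w - dotv v w.
Proof. by rewrite dotvDl dotvNl. Qed.

Lemma dotvZr a u v : dotv v (a *: u) = a * dotv v u.
Proof. by rewrite !(dotvC v) dotvZl. Qed.

Lemma dotv0l u : dotv 0 u = 0.
Proof. by rewrite -(scale0r 0) dotvZl mul0r. Qed.

Lemma dotv_ge0 u : 0 <= dotv u u.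
Proof. by apply: sumr_ge0 => i _; rewrite -expr2 sqr_ge0. Qed.

Lemma enorm_sqr u : enorm u ^+ 2 = dotv u u.
Proof. by rewrite sqr_sqrtr // dotv_ge0. Qed.

Lemma dotv_young lam u v : 0 < lam ->
  2 * dotv u v <= lam * dotv u u + dotv v v / lam.
Proof.
move=> lam_gt0; rewrite /dotv !mulr_sumr mulr_suml -big_split /=.
apply: ler_sum => i _; rewrite -subr_ge0.
have -> : lam * (u ord0 i * u ord0 i) + v ord0 i * v ord0 i / lam
          - 2 * (u ord0 i * v ord0 i) = (lam * u ord0 i - v ord0 i) ^+ 2 / lam.
  by field; rewrite gt_eqF.
by rewrite divr_ge0 ?sqr_ge0 ?ltW.
Qed.

End InnerProduct.

Section LipschitzGradient.
Context {R : realType} {d : nat}.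
Context {f : 'rV[R]_d -> R} {g : 'rV[R]_d -> 'rV[R]_d} {L : R}.
Hypotheses (grad_g : is_gradient f g) (L_gt0 : 0 < L) (lip_g : lipschitz_euclid g L).
Implicit Types u v w x y z : 'rV[R]_d.

Lemma lipschitz_dotv_le lam x y w : 0 < lam ->
  2 * dotv (g x - g y) w <= lam * L ^+ 2 * dotv (x - y) (x - y) + dotv w w / lam.
Proof.
move=> lam_gt0; apply: le_trans (dotv_young _ _ _ lam_gt0) _.
rewrite lerD2r -mulrA ler_pM2l // -!enorm_sqr -exprMn.
by rewrite ler_pXn2r ?nnegrE ?mulr_ge0 ?sqrtr_ge0 ?(ltW L_gt0).
Qed.

Lemma is_derive_along_line x u (t : R) :
  is_derive t 1 (fun t => f (x + t *: u)) (dotv (g (x + t *: u)) u).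
Proof.
have [df ddf] := grad_g (x + t *: u).
(* the difference quotients in t are those of f at x + t u in the direction u *)
have shiftE : (fun s : R => s^-1 *: (((fun t => f (x + t *: u)) \o shift t) (s *: 1)
                                     - f (x + t *: u)))
  = (fun s : R => s^-1 *: ((f \o shift (x + t *: u)) (s *: u) - f (x + t *: u))).
  apply: funext => s /=; congr (_ *: (f _ - _)).
  by rewrite /shift /= [s%:A]mulr1 scalerDl addrCA.
have dfu : derivable f (x + t *: u) u by exact: diff_derivable.
split; first by rewrite /derivable shiftE.
by rewrite /derive shiftE -/(derive _ _ _) deriveE // ddf.
Qed.

Lemma descent_lemma x y :
  f y <= f x + dotv (g x) (y - x) + L / 2 * dotv (y - x) (y - x).
Proof.
set u := y - x; set a := dotv (g x) u; set b := L / 2 * dotv u u.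
pose psi : R -> R := (fun t => f (x + t *: u)) - (a \*: (@id R) + b \*: (@id R) ^+ 2).
have psi_derive t : is_derive t (1 : R) psi
   (dotv (g (x + t *: u)) u - (a *: (1 : R) + b *: ((2%:R * t ^+ 1) *: (1 : R)))).
  by apply: is_deriveB; exact: is_derive_along_line.
have psiE t : psi t = f (x + t *: u) - (a * t + b * t ^+ 2) by rewrite /psi /= !fctE.
have : psi 1 <= psi 0.
  apply: (@ler0_derive1_le_cc _ psi 0 1); first 2 last.
  - by apply: derivable_within_continuous => t _; apply: ex_derive.
  - by rewrite in_itv /= lexx ler01.
  - by rewrite in_itv /= lexx ler01.
  - exact: ler01.
  - by move=> t _; apply: ex_derive.
  move=> t; rewrite in_itv /= => /andP[t_gt0 _].
  rewrite derive1E derive_val [a%:A]mulr1 [(2 * t ^+ 1)%:A]mulr1 expr1.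
  have Lt_inv_gt0 : 0 < (L * t)^-1 by rewrite invr_gt0 mulr_gt0.
  have := lipschitz_dotv_le _ (x + t *: u) x u Lt_inv_gt0.
  rewrite [x + _ - x]addrC addKr dotvZl dotvZr dotvBl invrK -/a.
  rewrite /GRing.scale /=.
  have -> : (L * t)^-1 * L ^+ 2 * (t * (t * dotv u u)) = L * t * dotv u u.
    by field; rewrite !gt_eqF.
  by rewrite /b; lra.
rewrite !psiE scale0r addr0 scale1r [x + u]addrC subrK.
rewrite expr1n expr0n /= !mulr1 !mulr0 addr0 subr0; lra.
Qed.

Lemma extrapolation_dotv_le (beta h : R) x v w : 0 <= beta -> 0 < h ->
  2 * dotv (g x - g (x + (beta / h) *: v)) w
    <= beta * L / h * (dotv v v + dotv w w).
Proof.
move=> beta_ge0 h_gt0; have [->|beta_gt0] := eqVneq beta 0.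
  by rewrite !mul0r scale0r addr0 subrr dotv0l mulr0.
have beta_pos : 0 < beta by rewrite lt_def beta_gt0.
have lam_gt0 : 0 < h / (beta * L) by rewrite divr_gt0 // mulr_gt0.
apply: le_trans (lipschitz_dotv_le _ _ _ _ lam_gt0) _.
rewrite opprD addNKr dotvNl dotvC dotvNl opprK dotvZl dotvZr.
rewrite le_eqVlt; apply/orP; left; apply/eqP; field.
by rewrite !gt_eqF.
Qed.

Lemma momentum_gradient_dotv {h al : R} {xp xk xn z} : h != 0 -> al != 0 ->
  xn = xk + al *: (xk - xp) - (h ^+ 2 * al) *: g z ->
  dotv (g z) (xn - xk)
    = (dotv (xk - xp) (xn - xk) - dotv (xn - xk) (xn - xk) / al) / h ^+ 2.
Proof.
move=> h_neq0 al_neq0 xnE.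
have step_gradient : (h ^+ 2 * al) *: g z = al *: (xk - xp) - (xn - xk).
  by rewrite xnE addrAC [xk + al *: _]addrC addrK opprB addrC subrK.
have := congr1 (dotv^~ (xn - xk)) step_gradient.
rewrite /= dotvZl dotvBl dotvZl => E.
by apply: (mulfI (mulf_neq0 (expf_neq0 2 h_neq0) al_neq0)); rewrite E; field; apply/andP.
Qed.

Lemma momentum_step_decrease {beta h c gam : R} {xp xk xn} :
  0 <= beta -> 0 < h -> 0 < c -> c <= gam ->
  xn = xk + (1 / (1 + gam * h)) *: (xk - xp)
         - (h ^+ 2 * (1 / (1 + gam * h))) *: g (xk + (beta / h) *: (xk - xp)) ->
  f xn + (beta * L / h + 1 / h ^+ 2) / 2 * enorm (xn - xk) ^+ 2
    <= f xk + (beta * L / h + 1 / h ^+ 2) / 2 * enorm (xk - xp) ^+ 2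
       - (c / h - L / 2 - beta * L / h) * enorm (xn - xk) ^+ 2.
Proof.
move=> beta_ge0 h_gt0 c_gt0 c_le_gam xnE.
set v := xk - xp in xnE *; set w := xn - xk.
set z := xk + (beta / h) *: v in xnE.
have denom_gt0 : 0 < 1 + gam * h.
  by rewrite addr_gt0 // mulr_gt0 // (lt_le_trans c_gt0).
have al_neq0 : 1 / (1 + gam * h) != 0 by rewrite lt0r_neq0 // divr_gt0.
have P_eq := momentum_gradient_dotv (lt0r_neq0 h_gt0) al_neq0 xnE.
rewrite invf_div divr1 -/w in P_eq.
have Q_le := extrapolation_dotv_le beta h xk v w beta_ge0 h_gt0.
have young := dotv_young 1 v w ltr01; rewrite mul1r invr1 mulr1 in young.
have descent := descent_lemma xk xn.
rewrite -/w -[g xk](subrK (g z)) dotvDl P_eq in descent.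
rewrite !enorm_sqr -/w; rewrite -/v in descent Q_le young.
have h2_gt0 : 0 < h ^+ 2 by rewrite exprn_gt0.
have young_scaled : 2 * (dotv v w / h ^+ 2) <= dotv v v / h ^+ 2 + dotv w w / h ^+ 2.
  by rewrite mulrA -mulrDl ler_wpM2r // invr_ge0 ltW.
have gam_term : c / h * dotv w w <= gam / h * dotv w w.
  by rewrite ler_wpM2r ?dotv_ge0 // ler_pM2r ?invr_gt0.
have split_P : (dotv v w - dotv w w * (1 + gam * h)) / h ^+ 2
             = dotv v w / h ^+ 2 - dotv w w / h ^+ 2 - gam / h * dotv w w.
  by field; rewrite gt_eqF.
rewrite split_P in descent.
lra.
Qed.

End LipschitzGradient.

Theorem mainTheorem16 (R : realType) (d : nat)
  (f : 'rV[R]_d -> R) (gradf : 'rV[R]_d -> 'rV[R]_d)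
  (L h beta c C : R) (gamma : nat -> R) (x : nat -> 'rV[R]_d) :
  C2_with_gradient f gradf ->
  0 < L -> lipschitz_euclid gradf L ->
  0 < h -> 0 <= beta -> 0 < c -> c <= C ->
  (forall k : nat, (1 <= k)%N -> c <= gamma k <= C) ->
  beta + h / 2 < c / L ->
  (forall k : nat, (1 <= k)%N ->
     let alpha := 1 / (1 + gamma k * h) in
     let s := h ^+ 2 * alpha in
     let y := x k + alpha *: (x k - x k.-1) in
     x k.+1 = y - s *: gradf (x k + (beta / h) *: (x k - x k.-1))) ->
  let v := fun k : nat => x k - x k.-1 in
  let alpha_t := beta * L / h + 1 / h ^+ 2 in
  let V := fun k : nat => f (x k) + alpha_t / 2 * enorm (v k) ^+ 2 in
  let delta := c / h - L / 2 - beta * L / h in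
  0 < delta /\
  (forall k : nat, (1 <= k)%N -> V k.+1 <= V k - delta * enorm (v k.+1) ^+ 2).
Proof.
move=> [grad_f _] L_gt0 lip h_gt0 beta_ge0 c_gt0 _ gamma_bounds stepsize_bound rec.
move=> v alpha_t V delta; split.
  have -> : delta = (c - L * (beta + h / 2)) / h by rewrite /delta; field; rewrite gt_eqF.
  by rewrite divr_gt0 // subr_gt0 mulrC -ltr_pdivlMr.
move=> k k_ge1; have /andP[c_le_gam _] := gamma_bounds k k_ge1.
exact: (momentum_step_decrease grad_f L_gt0 lip beta_ge0 h_gt0 c_gt0 c_le_gam (rec k k_ge1)).
Qed.
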